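(* Let $\Omega\subset H^2$ be a bounded open set, and let $f$ be a bounded function on $\Omega$ which is $C^\infty$ in $\Omega$, continuous on $\overline{\Omega}\setminus\{x=0\}$, satisfies $f_{xx}+f_{yy}+3x^{-1}f_x=0$ in $\Omega$, and satisfies $f=0$ on $\partial\Omega\setminus\{x=0\}$. Then $f\equiv 0$ on $\Omega$.
   Context: $H^2=\{(x,y)\in\mathbb{R}^2: x>0\}$ is the open right half-plane. *)

From Stdlib Require Import Reals Lra List.
Open Scope R_scope.

Definition pt := (R * R)%type.

Definition dist2 (p q : pt) : R :=
  sqrt ((fst p - fst q) ^ 2 + (snd p - snd q) ^ 2).

Definition H2 (p : pt) : Prop := 0 < fst p.

Definition subset2 (A B : pt -> Prop) : Prop := forall p, A p -> B p.

Definition open2 (U : pt -> Prop) : Prop :=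
  forall p, U p -> exists eps, 0 < eps /\ forall q, dist2 q p < eps -> U q.

Definition bounded_set2 (U : pt -> Prop) : Prop :=
  exists M, forall p, U p -> dist2 p (0, 0) <= M.

Definition closure2 (U : pt -> Prop) (p : pt) : Prop :=
  forall eps, 0 < eps -> exists q, U q /\ dist2 q p < eps.

Definition boundary2 (U : pt -> Prop) (p : pt) : Prop :=
  closure2 U p /\ closure2 (fun q => ~ U q) p.

Definition continuous_on2 (S : pt -> Prop) (g : pt -> R) : Prop :=
  forall p, S p -> forall eps, 0 < eps -> exists delta, 0 < delta /\
    forall q, S q -> dist2 q p < delta -> Rabs (g q - g p) < eps.

Definition partial_x_on (U : pt -> Prop) (f g : pt -> R) : Prop :=
  forall p, U p -> derivable_pt_lim (fun t => f (t, snd p)) (fst p) (g p).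
Definition partial_y_on (U : pt -> Prop) (f g : pt -> R) : Prop :=
  forall p, U p -> derivable_pt_lim (fun t => f (fst p, t)) (snd p) (g p).

(* C^infinity on U: all iterated partial derivatives (in every order of the
   directions; [false] = d/dx, [true] = d/dy, head of the list = last
   derivative taken) exist on U and are continuous on U. *)
Definition Cinf_on (U : pt -> Prop) (f : pt -> R) : Prop :=
  exists D : list bool -> pt -> R,
    D nil = f /\
    forall l, continuous_on2 U (D l) /\
              partial_x_on U (D l) (D (false :: l)) /\
              partial_y_on U (D l) (D (true :: l)).

From Stdlib Require Import Reals Lra Classical.
Open Scope R_scope.

(* The operator L = d_xx + d_yy + (3/x) d_x kills x^-2 and sends y^2 to 2, so
   u = f - eps x^-2 + delta y^2 satisfies L u = 2 delta > 0 and has no interior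
   maximum. Near the axis {x = 0} the bounded f is swamped by -eps x^-2, and on
   the rest of the boundary f <= 0 while delta y^2 < eps x^-2 once delta is small.
   Hence the supremum of u over the bounded set Omega, which is approached at some
   point of the closure, is nonpositive; at a point where f > 0 a suitable eps
   contradicts this. Applied to f and -f this gives f = 0. *)

Lemma Rabs_le_inv a b : Rabs a <= b -> - b <= a <= b.
Proof. unfold Rabs; destruct (Rcase_abs a); lra. Qed.

Lemma dist2_refl p : dist2 p p = 0.
Proof. unfold dist2. replace (_ + _) with 0 by ring. exact sqrt_0. Qed.

Lemma fst_dist2_le p q : Rabs (fst p - fst q) <= dist2 p q.
Proof.
  unfold dist2. rewrite <- sqrt_Rsqr_abs. apply sqrt_le_1_alt. unfold Rsqr.
  pose proof (pow2_ge_0 (snd p - snd q)). simpl. lra.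
Qed.

Lemma snd_dist2_le p q : Rabs (snd p - snd q) <= dist2 p q.
Proof.
  unfold dist2. rewrite <- sqrt_Rsqr_abs. apply sqrt_le_1_alt. unfold Rsqr.
  pose proof (pow2_ge_0 (fst p - fst q)). simpl. lra.
Qed.

Lemma dist2_lt_square p q r :
  Rabs (fst p - fst q) < r -> Rabs (snd p - snd q) < r -> dist2 p q < 2 * r.
Proof.
  intros H1 H2. unfold dist2.
  assert (0 <= r) by (pose proof (Rabs_pos (fst p - fst q)); lra).
  rewrite <- (sqrt_Rsqr (2 * r)) by lra.
  apply sqrt_lt_1_alt. split.
  - pose proof (pow2_ge_0 (fst p - fst q)); pose proof (pow2_ge_0 (snd p - snd q)); lra.
  - apply Rabs_def2 in H1; apply Rabs_def2 in H2. unfold Rsqr. nra.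
Qed.

Lemma dist2_horizontal x t y : dist2 (t, y) (x, y) = Rabs (t - x).
Proof. unfold dist2; simpl. rewrite <- sqrt_Rsqr_abs. f_equal. unfold Rsqr. ring. Qed.

Lemma dist2_vertical x s y : dist2 (x, s) (x, y) = Rabs (s - y).
Proof. unfold dist2; simpl. rewrite <- sqrt_Rsqr_abs. f_equal. unfold Rsqr. ring. Qed.

Lemma bounded_set2_square U :
  bounded_set2 U -> exists A, forall p, U p -> - A <= fst p <= A /\ - A <= snd p <= A.
Proof.
  intros [M HM]. exists (Rabs M). intros p Hp. pose proof (HM p Hp). pose proof (Rle_abs M).
  pose proof (fst_dist2_le p (0, 0)); pose proof (snd_dist2_le p (0, 0)).
  simpl in *. rewrite !Rminus_0_r in *.
  split; apply Rabs_le_inv; lra.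
Qed.

Lemma closure2_square U A p :
  (forall q, U q -> - A <= fst q <= A /\ - A <= snd q <= A) ->
  closure2 U p -> - A <= fst p <= A /\ - A <= snd p <= A.
Proof.
  intros HA Hp.
  assert (Hnear : forall e, 0 < e -> - A - e < fst p < A + e /\ - A - e < snd p < A + e).
  { intros e He. destruct (Hp e He) as [q [Hq Hd]].
    pose proof (HA q Hq). pose proof (fst_dist2_le q p); pose proof (snd_dist2_le q p).
    assert (Hx := Rabs_def2 (fst q - fst p) e ltac:(lra)).
    assert (Hy := Rabs_def2 (snd q - snd p) e ltac:(lra)). lra. }
  repeat split; apply Rnot_lt_le; intro Hlt;
    [ destruct (Hnear (- A - fst p)) | destruct (Hnear (fst p - A))
    | destruct (Hnear (- A - snd p)) | destruct (Hnear (snd p - A)) ]; lra.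
Qed.
(* Heine-Borel in the form of a creeping argument: the supremum of the [t] such
   that [G] holds on [[a, t]] can be pushed past itself unless it is [b]. *)
Lemma local_to_global_interval (G : (R -> Prop) -> Prop) a b :
  (forall I J : R -> Prop, (forall t, I t -> J t) -> G J -> G I) ->
  (forall I J, G I -> G J -> G (fun t => I t \/ J t)) ->
  (forall t, a <= t <= b -> exists rho, 0 < rho /\ G (fun s => t - rho < s < t + rho)) ->
  a <= b -> G (fun s => a <= s <= b).
Proof.
  intros Hmono Hunion Hloc Hab.
  set (E := fun t => a <= t <= b /\ G (fun s => a <= s <= t)).
  assert (HEa : E a).
  { split; [lra|]. destruct (Hloc a ltac:(lra)) as [rho [Hrho HG]].
    eapply Hmono; [|exact HG]. intros s Hs; simpl in *; lra. }
  destruct (completeness E) as [T [HT1 HT2]].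
  { exists b. intros t [Ht _]. lra. }
  { exists a; auto. }
  assert (HaT : a <= T) by (apply HT1; auto).
  assert (HTb : T <= b) by (apply HT2; intros t [Ht _]; lra).
  destruct (Hloc T ltac:(lra)) as [rho [Hrho HG]].
  destruct (classic (exists t, E t /\ T - rho < t)) as [[t [[Ht1 Ht2] Ht3]]|Hno].
  2:{ exfalso. assert (T <= T - rho); [|lra]. apply HT2. intros t Et.
      destruct (Rle_or_lt t (T - rho)); auto. exfalso; apply Hno; eauto. }
  assert (HtT : t <= T) by (apply HT1; split; auto).
  assert (HGu : G (fun s => a <= s <= Rmin (T + rho / 2) b)).
  { eapply Hmono; [|exact (Hunion _ _ Ht2 HG)]. intros s Hs; simpl in *.
    pose proof (Rmin_l (T + rho / 2) b).
    destruct (Rle_or_lt s t); [left | right]; lra. }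
  assert (Hmin : Rmin (T + rho / 2) b = b).
  { apply Rmin_right. apply Rnot_lt_le. intro Hlt.
    assert (T + rho / 2 <= T); [|lra].
    rewrite <- (Rmin_left (T + rho / 2) b) by lra.
    apply HT1. split; [rewrite Rmin_left|]; [lra | lra | exact HGu]. }
  rewrite Hmin in HGu. exact HGu.
Qed.

Lemma local_to_global_square (B : (pt -> Prop) -> Prop) A :
  (forall I J : pt -> Prop, (forall p, I p -> J p) -> B J -> B I) ->
  (forall I J, B I -> B J -> B (fun p => I p \/ J p)) ->
  (forall q, exists r, 0 < r /\ B (fun p => dist2 p q < r)) -> 0 <= A ->
  B (fun p => - A <= fst p <= A /\ - A <= snd p <= A).
Proof.
  intros Hmono Hunion Hloc HA.
  assert (Hstrip : forall x, exists rho, 0 < rho /\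
     B (fun p => x - rho < fst p < x + rho /\ - A <= snd p <= A)).
  { intros x.
    apply (local_to_global_interval (fun I => exists rho, 0 < rho /\
              B (fun p => x - rho < fst p < x + rho /\ I (snd p))) (- A) A); try lra.
    - intros I J HIJ [rho [Hrho HB]]. exists rho; split; auto.
      eapply Hmono; [|exact HB]. intros p [Hp1 Hp2]; split; auto.
    - intros I J [r1 [Hr1 HB1]] [r2 [Hr2 HB2]]. exists (Rmin r1 r2).
      pose proof (Rmin_l r1 r2); pose proof (Rmin_r r1 r2).
      split; [apply Rmin_pos; auto|].
      eapply Hmono; [|exact (Hunion _ _ HB1 HB2)]. simpl.
      intros p [Hp1 [Hp2|Hp2]]; [left|right]; split; auto; lra.
    - intros y _. destruct (Hloc (x, y)) as [r [Hr HB]].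
      exists (r / 2). split; [lra|]. exists (r / 2). split; [lra|].
      eapply Hmono; [|exact HB]. simpl. intros p [Hp1 Hp2].
      replace r with (2 * (r / 2)) by field.
      apply dist2_lt_square; simpl; apply Rabs_def1; lra. }
  apply (local_to_global_interval (fun I => B (fun p => I (fst p) /\ - A <= snd p <= A))
           (- A) A); try lra.
  - intros I J HIJ HB. eapply Hmono; [|exact HB]. intros p [Hp1 Hp2]; split; auto.
  - intros I J HB1 HB2.
    eapply Hmono; [|exact (Hunion _ _ HB1 HB2)]. simpl.
    intros p [[Hp1|Hp1] Hp2]; [left|right]; split; auto.
  - intros x _. destruct (Hstrip x) as [rho [Hrho HB]]. exists rho; split; auto.
Qed.

Definition sup_approached_at (U : pt -> Prop) (u : pt -> R) (S : R) (q : pt) : Prop :=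
  forall r eta, 0 < r -> 0 < eta -> exists p, U p /\ dist2 p q < r /\ S - eta < u p.

Lemma exists_sup_approached_at (U : pt -> Prop) (u : pt -> R) A S :
  0 <= A -> (forall p, U p -> - A <= fst p <= A /\ - A <= snd p <= A) ->
  is_lub (fun v => exists p, U p /\ v = u p) S ->
  exists q, sup_approached_at U u S q.
Proof.
  intros HA Hsq [HS1 HS2].
  apply NNPP. intro Hnone.
  set (B := fun X : pt -> Prop =>
              exists eta, 0 < eta /\ forall p, X p -> U p -> u p <= S - eta).
  assert (HBsq : B (fun p => - A <= fst p <= A /\ - A <= snd p <= A)).
  { apply local_to_global_square; auto.
    - intros I J HIJ [eta [Heta HJ]]. exists eta; split; auto.
    - intros I J [e1 [He1 HI]] [e2 [He2 HJ]]. exists (Rmin e1 e2).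
      pose proof (Rmin_l e1 e2); pose proof (Rmin_r e1 e2).
      split; [apply Rmin_pos; auto|].
      intros p [Hp|Hp] HUp; [specialize (HI p Hp HUp) | specialize (HJ p Hp HUp)]; lra.
    - intros q. apply NNPP. intro Hfar. apply Hnone. exists q.
      intros r eta Hr Heta. apply NNPP. intro Hno. apply Hfar.
      exists r. split; auto. exists eta. split; auto.
      intros p Hp HUp. apply Rnot_lt_le. intro Hlt. apply Hno. eauto. }
  destruct HBsq as [eta [Heta Hbelow]].
  assert (S <= S - eta); [|lra].
  apply HS2. intros v [p [Hp ->]]. apply Hbelow; auto.
Qed.

Lemma sup_approached_le (U S : pt -> Prop) (g : pt -> R) (Sup : R) q :
  continuous_on2 S g -> S q -> (forall p, U p -> S p) ->
  sup_approached_at U g Sup q -> Sup <= g q.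
Proof.
  intros Hg HSq HUS Happ. apply Rnot_lt_le. intro Hlt.
  destruct (Hg q HSq ((Sup - g q) / 2) ltac:(lra)) as [d [Hd Hnear]].
  destruct (Happ d ((Sup - g q) / 2) Hd ltac:(lra)) as [p [Hp [Hdp Hup]]].
  specialize (Hnear p (HUS p Hp) Hdp). apply Rabs_def2 in Hnear. lra.
Qed.

Lemma derivable_pt_lim_nonzero_ascent (h : R -> R) c l :
  derivable_pt_lim h c l -> l <> 0 ->
  forall r, 0 < r -> exists s, Rabs s < r /\ h c < h (c + s).
Proof.
  intros Hd Hl r Hr.
  destruct (Hd (Rabs l) (Rabs_pos_lt l Hl)) as [[d Hdpos] Hq]; simpl in Hq.
  set (m := Rmin (d / 2) (r / 2)).
  assert (Hm : 0 < m /\ m < d /\ m < r).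
  { pose proof (Rmin_l (d / 2) (r / 2)); pose proof (Rmin_r (d / 2) (r / 2)).
    unfold m; repeat split; try apply Rmin_pos; lra. }
  set (s := if Rlt_dec 0 l then m else - m).
  assert (Hs : 0 < s * l /\ Rabs s = m).
  { unfold s; destruct (Rlt_dec 0 l).
    - split; [nra | apply Rabs_pos_eq; lra].
    - split; [assert (l < 0) by lra; nra | rewrite Rabs_Ropp; apply Rabs_pos_eq; lra]. }
  exists s. split; [lra|].
  assert (Hs0 : s <> 0) by (intro H0; rewrite H0 in Hs; lra).
  specialize (Hq s Hs0 ltac:(lra)).
  set (Q := (h (c + s) - h c) / s) in Hq.
  assert (HQl : 0 < Q * l).
  { apply Rabs_def2 in Hq. unfold Rabs in Hq; destruct (Rcase_abs l); nra. }
  assert (HQs : h (c + s) - h c = Q * s) by (unfold Q; field; exact Hs0).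
  assert (0 < Q * s) by (assert (0 < (Q * l) * (s * l)) by nra; nra).
  lra.
Qed.

Lemma local_max_derivative_eq0 (h : R -> R) c r l : 0 < r ->
  (forall t, c - r < t < c + r -> h t <= h c) ->
  derivable_pt_lim h c l -> l = 0.
Proof.
  intros Hr Hmax Hd. apply NNPP. intro Hl.
  destruct (derivable_pt_lim_nonzero_ascent h c l Hd Hl r Hr) as [s [Hs Hup]].
  apply Rabs_def2 in Hs. specialize (Hmax (c + s) ltac:(lra)). lra.
Qed.

Lemma local_max_second_derivative_le0 (h h' : R -> R) c r L : 0 < r ->
  (forall t, c - r < t < c + r -> h t <= h c) ->
  (forall t, c - r < t < c + r -> derivable_pt_lim h t (h' t)) ->
  derivable_pt_lim h' c L -> L <= 0.
Proof.
  intros Hr Hmax Hd Hd2.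
  assert (H0 : h' c = 0).
  { apply (local_max_derivative_eq0 h c r); auto. apply Hd; lra. }
  apply Rnot_lt_le. intro HL.
  destruct (Hd2 L HL) as [[d Hdpos] Hq]; simpl in Hq.
  assert (Hpos : forall t, 0 < t < d -> 0 < h' (c + t)).
  { intros t Ht. specialize (Hq t ltac:(lra) ltac:(rewrite Rabs_pos_eq; lra)).
    rewrite H0, Rminus_0_r in Hq. apply Rabs_def2 in Hq.
    assert (0 < h' (c + t) / t) by lra.
    replace (h' (c + t)) with (h' (c + t) / t * t) by (field; lra). nra. }
  set (s := Rmin (d / 2) (r / 2)).
  assert (Hs : 0 < s /\ s < d /\ s < r).
  { pose proof (Rmin_l (d / 2) (r / 2)); pose proof (Rmin_r (d / 2) (r / 2)).
    unfold s; repeat split; try apply Rmin_pos; lra. }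
  destruct (MVT_cor2 h h' c (c + s) ltac:(lra)) as [xi [Hmvt Hxi]].
  { intros t Ht. apply Hd. lra. }
  specialize (Hpos (xi - c) ltac:(lra)). replace (c + (xi - c)) with xi in Hpos by ring.
  specialize (Hmax (c + s) ltac:(lra)).
  assert (0 < h' xi * (c + s - c)) by (apply Rmult_lt_0_compat; lra).
  lra.
Qed.

Lemma interior_max_partials (U : pt -> Prop) (h hx hy hxx hyy : pt -> R) q :
  open2 U -> U q -> (forall p, U p -> h p <= h q) ->
  partial_x_on U h hx -> partial_y_on U h hy ->
  partial_x_on U hx hxx -> partial_y_on U hy hyy ->
  hx q = 0 /\ hxx q <= 0 /\ hyy q <= 0.
Proof.
  intros Hopen Hq Hmax Hx Hy Hxx Hyy.
  destruct (Hopen q Hq) as [r [Hr Hball]].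
  destruct q as [x y]; simpl in *.
  assert (Hhor : forall t, x - r < t < x + r -> U (t, y)).
  { intros t Ht. apply Hball. rewrite dist2_horizontal. apply Rabs_def1; lra. }
  assert (Hver : forall s, y - r < s < y + r -> U (x, s)).
  { intros s Hs. apply Hball. rewrite dist2_vertical. apply Rabs_def1; lra. }
  repeat split.
  - apply (local_max_derivative_eq0 (fun t => h (t, y)) x r); [exact Hr | |].
    + intros t Ht. apply Hmax, Hhor, Ht.
    + exact (Hx (x, y) Hq).
  - apply (local_max_second_derivative_le0 (fun t => h (t, y)) (fun t => hx (t, y)) x r); [exact Hr | | |].
    + intros t Ht. apply Hmax, Hhor, Ht.
    + intros t Ht. exact (Hx (t, y) (Hhor t Ht)).
    + exact (Hxx (x, y) Hq).
  - apply (local_max_second_derivative_le0 (fun s => h (x, s)) (fun s => hy (x, s)) y r); [exact Hr | | |].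
    + intros s Hs. apply Hmax, Hver, Hs.
    + intros s Hs. exact (Hy (x, s) (Hver s Hs)).
    + exact (Hyy (x, y) Hq).
Qed.

Lemma derivable_pt_lim_div_pow (c t : R) (n : nat) : t <> 0 ->
  derivable_pt_lim (fun s => c / s ^ S n) t (- INR (S n) * c / t ^ S (S n)).
Proof.
  intros Ht.
  apply derivable_pt_lim_ext with (fct_cte c / (fun s => s ^ S n))%F; [reflexivity|].
  replace (- INR (S n) * c / t ^ S (S n))
    with ((0 * t ^ S n - INR (S n) * t ^ Init.Nat.pred (S n) * c) / (t ^ S n)²)
    by (simpl pred; unfold Rsqr; simpl; field; repeat split; try apply pow_nonzero; exact Ht).
  apply derivable_pt_lim_div.
  - apply derivable_pt_lim_const.
  - apply derivable_pt_lim_pow.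
  - apply pow_nonzero, Ht.
Qed.

Lemma continuity_pt_ball (c : R -> R) t0 : continuity_pt c t0 ->
  forall e, 0 < e -> exists d, 0 < d /\ forall t, Rabs (t - t0) < d -> Rabs (c t - c t0) < e.
Proof.
  intros Hc e He. destruct (Hc e He) as [d [Hd Hball]]. exists d; split; [exact Hd|].
  intros t Ht. destruct (Req_dec t t0) as [->|Hne].
  - rewrite Rminus_diag, Rabs_R0. exact He.
  - apply (Hball t). split; [split; [exact I | auto] | exact Ht].
Qed.

Lemma continuous_on2_separated (S : pt -> Prop) (g h : pt -> R) (a b : R -> R) :
  continuous_on2 S g ->
  (forall p, S p -> continuity_pt a (fst p)) ->
  (forall p, S p -> continuity_pt b (snd p)) ->
  (forall p, h p = g p + a (fst p) + b (snd p)) ->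
  continuous_on2 S h.
Proof.
  intros Hg Ha Hb Hh p Hp e He.
  destruct (Hg p Hp (e / 3) ltac:(lra)) as [d1 [Hd1 Hg']].
  destruct (continuity_pt_ball a _ (Ha p Hp) (e / 3) ltac:(lra)) as [d2 [Hd2 Ha']].
  destruct (continuity_pt_ball b _ (Hb p Hp) (e / 3) ltac:(lra)) as [d3 [Hd3 Hb']].
  exists (Rmin d1 (Rmin d2 d3)).
  pose proof (Rmin_l d1 (Rmin d2 d3)); pose proof (Rmin_r d1 (Rmin d2 d3)).
  pose proof (Rmin_l d2 d3); pose proof (Rmin_r d2 d3).
  split; [repeat apply Rmin_pos; assumption|].
  intros q Hq Hd. rewrite !Hh.
  pose proof (fst_dist2_le q p); pose proof (snd_dist2_le q p).
  specialize (Hg' q Hq ltac:(lra)).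
  specialize (Ha' (fst q) ltac:(lra)). specialize (Hb' (snd q) ltac:(lra)).
  apply Rabs_def2 in Hg', Ha', Hb'. apply Rabs_def1; lra.
Qed.

Lemma partial_x_on_opp U f g :
  partial_x_on U f g -> partial_x_on U (fun p => - f p) (fun p => - g p).
Proof. intros Hf p Hp. exact (derivable_pt_lim_opp _ _ _ (Hf p Hp)). Qed.

Lemma partial_y_on_opp U f g :
  partial_y_on U f g -> partial_y_on U (fun p => - f p) (fun p => - g p).
Proof. intros Hf p Hp. exact (derivable_pt_lim_opp _ _ _ (Hf p Hp)). Qed.

Lemma continuous_on2_opp S g : continuous_on2 S g -> continuous_on2 S (fun p => - g p).
Proof.
  intros Hg p Hp e He. destruct (Hg p Hp e He) as [d [Hd Hnear]].
  exists d. split; [exact Hd|]. intros q Hq Hdq.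
  replace (- g q - - g p) with (- (g q - g p)) by ring.
  rewrite Rabs_Ropp. exact (Hnear q Hq Hdq).
Qed.

Definition barrier (eps delta : R) (f : pt -> R) (p : pt) : R :=
  f p - eps / fst p ^ 2 + delta * snd p ^ 2.

Section Barrier.
Variables (U : pt -> Prop) (f fx fy fxx fyy : pt -> R) (eps delta : R).
Hypothesis HU : subset2 U H2.

Lemma barrier_partial_x :
  partial_x_on U f fx ->
  partial_x_on U (barrier eps delta f) (fun p => fx p + 2 * eps / fst p ^ 3).
Proof.
  intros Hfx p Hp. pose proof (HU p Hp) as Hx; unfold H2 in Hx.
  apply derivable_pt_lim_ext
    with ((fun t => f (t, snd p)) - (fun t => (eps / t ^ 2)%R) + fct_cte (delta * snd p ^ 2)%R)%F;
    [reflexivity|].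
  replace (fx p + 2 * eps / fst p ^ 3)
    with (fx p - (- INR 2 * eps / fst p ^ 3) + 0) by (simpl; field; lra).
  apply derivable_pt_lim_plus; [apply derivable_pt_lim_minus|apply derivable_pt_lim_const].
  - exact (Hfx p Hp).
  - apply (derivable_pt_lim_div_pow eps (fst p) 1); lra.
Qed.

Lemma barrier_partial_xx :
  partial_x_on U fx fxx ->
  partial_x_on U (fun p => fx p + 2 * eps / fst p ^ 3)
    (fun p => fxx p - 6 * eps / fst p ^ 4).
Proof.
  intros Hfxx p Hp. pose proof (HU p Hp) as Hx; unfold H2 in Hx.
  apply derivable_pt_lim_ext
    with ((fun t => fx (t, snd p)) + (fun t => (2 * eps / t ^ 3)%R))%F; [reflexivity|].
  replace (fxx p - 6 * eps / fst p ^ 4)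
    with (fxx p + - INR 3 * (2 * eps) / fst p ^ 4) by (simpl; field; lra).
  apply derivable_pt_lim_plus.
  - exact (Hfxx p Hp).
  - apply (derivable_pt_lim_div_pow (2 * eps) (fst p) 2); lra.
Qed.

Lemma barrier_partial_y :
  partial_y_on U f fy ->
  partial_y_on U (barrier eps delta f) (fun p => fy p + 2 * delta * snd p).
Proof.
  intros Hfy p Hp.
  apply derivable_pt_lim_ext
    with ((fun s => f (fst p, s)) - fct_cte (eps / fst p ^ 2)%R
          + mult_real_fct delta (fun s => (s ^ 2)%R))%F; [reflexivity|].
  replace (fy p + 2 * delta * snd p)
    with (fy p - 0 + delta * (INR 2 * snd p ^ Init.Nat.pred 2)) by (simpl; ring).
  apply derivable_pt_lim_plus; [apply derivable_pt_lim_minus|apply derivable_pt_lim_scal].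
  - exact (Hfy p Hp).
  - apply derivable_pt_lim_const.
  - apply derivable_pt_lim_pow.
Qed.

Lemma barrier_partial_yy :
  partial_y_on U fy fyy ->
  partial_y_on U (fun p => fy p + 2 * delta * snd p) (fun p => fyy p + 2 * delta).
Proof.
  intros Hfyy p Hp.
  apply derivable_pt_lim_ext
    with ((fun s => fy (fst p, s)) + mult_real_fct (2 * delta) id)%F; [reflexivity|].
  replace (fyy p + 2 * delta) with (fyy p + 2 * delta * 1) by ring.
  apply derivable_pt_lim_plus.
  - exact (Hfyy p Hp).
  - apply derivable_pt_lim_scal, derivable_pt_lim_id.
Qed.

Lemma barrier_equation :
  (forall p, U p -> fxx p + fyy p + 3 / fst p * fx p = 0) ->
  forall p, U p ->
    (fxx p - 6 * eps / fst p ^ 4) + (fyy p + 2 * delta)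
    + 3 / fst p * (fx p + 2 * eps / fst p ^ 3) = 2 * delta.
Proof.
  intros Hpde p Hp. pose proof (HU p Hp) as Hx; unfold H2 in Hx.
  transitivity (fxx p + fyy p + 3 / fst p * fx p + 2 * delta).
  - field. lra.
  - rewrite (Hpde p Hp). ring.
Qed.

End Barrier.

Section MaximumPrinciple.
Variables (Omega : pt -> Prop) (f fx fy fxx fyy : pt -> R) (A M : R).
Hypothesis Hopen : open2 Omega.
Hypothesis Hsquare : forall p, Omega p -> - A <= fst p <= A /\ - A <= snd p <= A.
Hypothesis Hhalf : subset2 Omega H2.
Hypothesis Hf_le : forall p, Omega p -> f p <= M.
Hypothesis Hcont : continuous_on2 (fun p => closure2 Omega p /\ fst p <> 0) f.
Hypothesis Hfx : partial_x_on Omega f fx.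
Hypothesis Hfy : partial_y_on Omega f fy.
Hypothesis Hfxx : partial_x_on Omega fx fxx.
Hypothesis Hfyy : partial_y_on Omega fy fyy.
Hypothesis Hpde : forall p, Omega p -> fxx p + fyy p + 3 / fst p * fx p = 0.
Hypothesis Hboundary : forall p, boundary2 Omega p -> fst p <> 0 -> f p <= 0.

Section FixedBarrier.
Variables eps delta : R.
Hypothesis Heps : 0 < eps.
Hypothesis Hdelta : 0 < delta.

Lemma f_plus_parabola_le p : Omega p -> f p + delta * snd p ^ 2 <= M + delta * A ^ 2.
Proof.
  intros Hp. destruct (Hsquare p Hp) as [_ Hy]. pose proof (Hf_le p Hp).
  assert (snd p ^ 2 <= A ^ 2) by (simpl; nra).
  nra.
Qed.

Lemma barrier_neg_near_axis :
  exists r, 0 < r /\ forall p, Omega p -> fst p < r -> barrier eps delta f p < 0.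
Proof.
  set (K := Rabs (M + delta * A ^ 2) + 1).
  assert (HK : M + delta * A ^ 2 < K /\ 0 < K)
    by (pose proof (Rle_abs (M + delta * A ^ 2)); pose proof (Rabs_pos (M + delta * A ^ 2));
        unfold K; lra).
  exists (Rmin 1 (eps / K)).
  assert (HeK : 0 < eps / K) by (apply Rdiv_lt_0_compat; lra).
  pose proof (Rmin_l 1 (eps / K)); pose proof (Rmin_r 1 (eps / K)).
  split; [apply Rmin_pos; lra|].
  intros p Hp Hxr.
  pose proof (Hhalf p Hp) as Hx; unfold H2 in Hx.
  assert (Hx2 : K * fst p ^ 2 < eps).
  { assert (fst p ^ 2 < eps / K) by (simpl; nra).
    replace eps with (K * (eps / K)) by (field; lra). nra. }
  assert (Hbig : K < eps / fst p ^ 2).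
  { assert (Hquot : eps / fst p ^ 2 * fst p ^ 2 = eps) by (field; lra).
    assert (0 < fst p ^ 2) by (apply pow_lt, Hx). nra. }
  pose proof (f_plus_parabola_le p Hp). unfold barrier. lra.
Qed.

Lemma barrier_neg_on_boundary :
  delta * A ^ 4 < eps ->
  forall q, boundary2 Omega q -> fst q <> 0 -> barrier eps delta f q < 0.
Proof.
  intros Hsmall q Hq Hxq. unfold barrier.
  destruct (closure2_square Omega A q Hsquare (proj1 Hq)) as [Hx Hy].
  pose proof (Hboundary q Hq Hxq).
  assert (Hx2 : 0 < fst q ^ 2) by (rewrite <- Rsqr_pow2; apply Rsqr_pos_lt, Hxq).
  assert (fst q ^ 2 <= A ^ 2 /\ snd q ^ 2 <= A ^ 2) as [HxA HyA] by (simpl; split; nra).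
  assert (Hprod : delta * snd q ^ 2 * fst q ^ 2 < eps).
  { assert (delta * snd q ^ 2 * fst q ^ 2 <= delta * A ^ 4); [|lra].
    replace (A ^ 4) with (A ^ 2 * A ^ 2) by ring.
    rewrite Rmult_assoc. apply Rmult_le_compat_l; [lra|]. apply Rmult_le_compat; nra. }
  assert (Hquot : eps / fst q ^ 2 * fst q ^ 2 = eps) by (field; lra).
  assert (delta * snd q ^ 2 < eps / fst q ^ 2) by nra.
  lra.
Qed.

Lemma barrier_continuous :
  continuous_on2 (fun p => closure2 Omega p /\ fst p <> 0) (barrier eps delta f).
Proof.
  apply (continuous_on2_separated _ f _ (fun t => - (eps / t ^ 2)) (fun s => delta * s ^ 2)).
  - exact Hcont.
  - intros p [_ Hx]. apply derivable_continuous_pt.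
    exact (exist _ _ (derivable_pt_lim_opp _ _ _ (derivable_pt_lim_div_pow eps (fst p) 1 Hx))).
  - intros p _. apply derivable_continuous_pt.
    exact (exist _ _ (derivable_pt_lim_scal _ delta _ _ (derivable_pt_lim_pow (snd p) 2))).
  - intros p. unfold barrier. ring.
Qed.

Lemma barrier_no_interior_max q :
  Omega q -> ~ (forall p, Omega p -> barrier eps delta f p <= barrier eps delta f q).
Proof.
  intros Hq Hmax.
  destruct (interior_max_partials Omega (barrier eps delta f) _ _ _ _ q Hopen Hq Hmax
              (barrier_partial_x Omega f fx eps delta Hhalf Hfx)
              (barrier_partial_y Omega f fy eps delta Hfy)
              (barrier_partial_xx Omega fx fxx eps Hhalf Hfxx)
              (barrier_partial_yy Omega fy fyy delta Hfyy)) as [Hux [Huxx Huyy]].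
  pose proof (barrier_equation Omega fx fxx fyy eps delta Hhalf Hpde q Hq) as Heq.
  cbv beta in Hux, Huxx, Huyy. rewrite Hux, Rmult_0_r in Heq. lra.
Qed.

Lemma barrier_le0 : delta * A ^ 4 < eps -> forall p, Omega p -> barrier eps delta f p <= 0.
Proof.
  intros Hsmall p0 Hp0. apply Rnot_lt_le. intro Hpos.
  set (u := barrier eps delta f) in *.
  assert (HA : 0 <= A) by (destruct (Hsquare p0 Hp0) as [Hx _]; lra).
  destruct (completeness (fun v => exists p, Omega p /\ v = u p)) as [S HS].
  { exists (M + delta * A ^ 2). intros v [p [Hp ->]].
    pose proof (f_plus_parabola_le p Hp).
    assert (0 <= eps / fst p ^ 2).
    { apply Rlt_le, Rdiv_lt_0_compat; [lra | apply pow_lt, Hhalf, Hp]. }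
    unfold u, barrier. lra. }
  { exists (u p0), p0. auto. }
  assert (HS0 : 0 < S) by (assert (u p0 <= S) by (apply (proj1 HS); eauto); lra).
  destruct (exists_sup_approached_at Omega u A S HA Hsquare HS) as [q Hq].
  assert (Hclos : closure2 Omega q).
  { intros r Hr. destruct (Hq r 1 Hr ltac:(lra)) as [p [Hp [Hd _]]]. eauto. }
  destruct (Req_dec (fst q) 0) as [Haxis|Hoff].
  - destruct barrier_neg_near_axis as [r [Hr Hneg]].
    destruct (Hq r S Hr HS0) as [p [Hp [Hd Hup]]].
    pose proof (fst_dist2_le p q) as Hfst. rewrite Haxis, Rminus_0_r in Hfst.
    pose proof (Rle_abs (fst p)).
    specialize (Hneg p Hp ltac:(lra)). fold u in Hneg. lra.
  - assert (HSq : S <= u q).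
    { apply (sup_approached_le Omega _ u S q barrier_continuous (conj Hclos Hoff)); [|exact Hq].
      intros p Hp. split.
      - intros r Hr. exists p. rewrite dist2_refl. auto.
      - pose proof (Hhalf p Hp) as Hx; unfold H2 in Hx. lra. }
    destruct (classic (Omega q)) as [HOq|HnOq].
    + apply (barrier_no_interior_max q HOq). intros p Hp.
      assert (u p <= S) by (apply (proj1 HS); eauto). fold u. lra.
    + assert (Hbq : boundary2 Omega q).
      { split; [exact Hclos|]. intros r Hr. exists q. rewrite dist2_refl. auto. }
      pose proof (barrier_neg_on_boundary Hsmall q Hbq Hoff) as Hneg. fold u in Hneg. lra.
Qed.

End FixedBarrier.

Lemma maximum_principle p : Omega p -> f p <= 0.
Proof.
  intros Hp. apply Rnot_lt_le. intro Hpos.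
  pose proof (Hhalf p Hp) as Hx; unfold H2 in Hx.
  assert (HA : 0 < A) by (destruct (Hsquare p Hp) as [[_ HxA] _]; lra).
  assert (HA4 : 0 < A ^ 4) by (apply pow_lt, HA).
  assert (Hx2 : 0 < fst p ^ 2) by (apply pow_lt, Hx).
  set (eps := f p * fst p ^ 2 / 2).
  assert (Heps : 0 < eps) by (unfold eps; nra).
  set (delta := eps / (2 * A ^ 4)).
  assert (Hdelta : 0 < delta) by (unfold delta; apply Rdiv_lt_0_compat; lra).
  assert (Hsmall : delta * A ^ 4 < eps).
  { unfold delta. replace (eps / (2 * A ^ 4) * A ^ 4) with (eps / 2) by (field; lra). lra. }
  pose proof (barrier_le0 eps delta Heps Hdelta Hsmall p Hp) as Hle.
  unfold barrier in Hle.
  assert (eps / fst p ^ 2 = f p / 2) by (unfold eps; field; lra).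
  pose proof (pow2_ge_0 (snd p)). nra.
Qed.

End MaximumPrinciple.

Theorem proposition4p2 (Omega : pt -> Prop) (f : pt -> R) :
  open2 Omega ->
  bounded_set2 Omega ->
  subset2 Omega H2 ->
  (exists M, forall p, Omega p -> Rabs (f p) <= M) ->
  Cinf_on Omega f ->
  continuous_on2 (fun p => closure2 Omega p /\ fst p <> 0) f ->
  (exists fx fy fxx fyy : pt -> R,
      partial_x_on Omega f fx /\ partial_y_on Omega f fy /\
      partial_x_on Omega fx fxx /\ partial_y_on Omega fy fyy /\
      forall p, Omega p -> fxx p + fyy p + 3 / fst p * fx p = 0) ->
  (forall p, boundary2 Omega p -> fst p <> 0 -> f p = 0) ->
  forall p, Omega p -> f p = 0.
Proof.
  (* only the second partial derivatives enter *)
  intros Hopen Hbounded Hhalf [M HM] _ Hcont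
    [fx [fy [fxx [fyy [Hfx [Hfy [Hfxx [Hfyy Hpde]]]]]]]] Hboundary p Hp.
  destruct (bounded_set2_square Omega Hbounded) as [A Hsquare].
  assert (Hle : f p <= 0).
  { apply (maximum_principle Omega f fx fy fxx fyy A M); auto.
    - intros q Hq. exact (proj2 (Rabs_le_inv _ _ (HM q Hq))).
    - intros q Hq Hx. rewrite (Hboundary q Hq Hx). lra. }
  assert (Hge : - f p <= 0).
  { apply (maximum_principle Omega (fun q => - f q) (fun q => - fx q) (fun q => - fy q)
             (fun q => - fxx q) (fun q => - fyy q) A M); auto.
    - intros q Hq. pose proof (Rabs_le_inv _ _ (HM q Hq)). lra.
    - apply continuous_on2_opp, Hcont.
    - apply partial_x_on_opp, Hfx.
    - apply partial_y_on_opp, Hfy.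
    - apply partial_x_on_opp, Hfxx.
    - apply partial_y_on_opp, Hfyy.
    - intros q Hq. pose proof (Hpde q Hq). cbv beta.
      replace (- fxx q + - fyy q + 3 / fst q * - fx q)
        with (- (fxx q + fyy q + 3 / fst q * fx q)) by ring. lra.
    - intros q Hq Hx. rewrite (Hboundary q Hq Hx). lra. }
  lra.
Qed.
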